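(* Let $\Delta_1,\Delta_2$ be simplicial complexes on $[n]$ and let $A,B,A',B'\subseteq[n]$ be nonempty sets such that $A\cap B=\emptyset$, $A'\cap B'=\emptyset$, and neither $A\cup B$ nor $A'\cup B'$ meets the vertex set of $\Delta_1\cup\Delta_2$. Then $$\tilde H_i\big((A*\Delta_1)\cup(B*\Delta_2);\mathbb{K}\big)\cong\tilde H_i\big((A'*\Delta_1)\cup(B'*\Delta_2);\mathbb{K}\big)\quad\text{for all } i>0.$$
   Context: A simplicial complex on $[n]$ is a finite family of subsets of $[n]$ closed under taking subsets (singletons need not belong to it); its vertex set is the union of its faces. For a nonempty $A\subseteq[n]$ and a simplicial complex $\Delta$ on $[n]$, the cone $A*\Delta$ is the simplicial complex whose facets are the sets $A\cup F$ with $F$ a facet of $\Delta$. $\tilde H_i(\,\cdot\,;\mathbb{K})$ denotes reduced simplicial homology with coefficients in the field $\mathbb{K}$. *)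

From HB Require Import structures.
From mathcomp Require Import all_boot all_order all_algebra.
Set Implicit Arguments. Unset Strict Implicit. Unset Printing Implicit Defensive.
Import GRing.Theory.
Local Open Scope ring_scope.

(* Vertex set [n] is modelled by 'I_n.  A simplicial complex is a family of
   subsets closed under taking subsets (possibly empty, possibly not containing
   all singletons). *)
Definition is_simplicial_complex (n : nat) (D : {set {set 'I_n}}) : Prop :=
  forall F G : {set 'I_n}, F \in D -> G \subset F -> G \in D.

Definition vertex_set (n : nat) (D : {set {set 'I_n}}) : {set 'I_n} :=
  \bigcup_(F in D) F.

(* cone A * D : the complex generated by the facets A :|: F (F facet of D);
   equivalently all subsets of A :|: F with F a face of D. *)
Definition cone (n : nat) (A : {set 'I_n}) (D : {set {set 'I_n}}) : {set {set 'I_n}} :=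
  [set G : {set 'I_n} | [exists F in D, G \subset A :|: F]].

(* Chains: K-valued functions on subsets of [n]; faces of dimension i are the
   faces with i+1 vertices (the empty face has dimension -1). *)
Definition chainsp (K : fieldType) (n : nat) := {ffun {set 'I_n} -> K^o}.

Definition fdelta (K : fieldType) (n : nat) (s : {set 'I_n}) : chainsp K n :=
  [ffun t => ((t == s)%:R : K)].

(* simplicial boundary with the increasing ordering of vertices:
   d[v_0 < ... < v_k] = sum_j (-1)^j [.. v_j omitted ..] *)
Definition bdry_fun (K : fieldType) (n : nat) (f : chainsp K n) : chainsp K n :=
  \sum_(s : {set 'I_n}) f s *:
     \sum_(v in s) ((-1) ^+ #|[set u in s | (u < v)%N]| : K) *: fdelta K (s :\ v).

Definition bdry (K : fieldType) (n : nat) : 'End(chainsp K n) := linfun (@bdry_fun K n).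

Definition chains (K : fieldType) (n : nat) (D : {set {set 'I_n}}) (i : nat)
  : {vspace chainsp K n} :=
  <<[seq fdelta K s | s <- enum [set s in D | #|s| == i.+1]]>>%VS.

Definition cycles (K : fieldType) (n : nat) (D : {set {set 'I_n}}) (i : nat) :=
  (chains K D i :&: lker (bdry K n))%VS.

Definition boundaries (K : fieldType) (n : nat) (D : {set {set 'I_n}}) (i : nat) :=
  (bdry K n @: chains K D i.+1)%VS.

Definition red_betti (K : fieldType) (n : nat) (D : {set {set 'I_n}}) (i : nat) : nat :=
  (\dim (cycles K D i) - \dim (boundaries K D i))%N.

From HB Require Import structures.
From mathcomp Require Import all_boot all_order all_algebra.
From mathcomp Require Import ring.
Set Implicit Arguments. Unset Strict Implicit. Unset Printing Implicit Defensive.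
Import GRing.Theory.
Local Open Scope ring_scope.

(* Both sides equal the reduced Betti number of D1 :&: D2 in degree i - 1.
   X1 = A * D1 and X2 = B * D2 are cones with apexes a \in A and b \in B, and
   X1 :&: X2 = D1 :&: D2 because A :|: B avoids the vertices of D1 :|: D2.  The
   cone operator h_a (s |-> +-(a |: s)) satisfies d h_a + h_a d = id, so every
   cycle of a cone bounds in it.  Hence the Mayer-Vietoris connecting map
   z |-> d (X1-part of z) sends Z_i(X1 :|: X2) onto Z_(i-1)(X1 :&: X2), the
   preimage of B_(i-1)(X1 :&: X2) is exactly B_i(X1 :|: X2), and rank-nullity
   gives dim H_i(X1 :|: X2) = dim H_(i-1)(X1 :&: X2).  The condition that b is
   not a vertex of X1 makes the X1-part of h_a y - h_b y equal to h_a y. *)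

Lemma dim_preim_codim (K : fieldType) (aT rT : vectType K) (f : 'Hom(aT, rT))
    (Z : {vspace aT}) (U : {vspace rT}) : (U <= f @: Z)%VS ->
  (\dim Z - \dim (Z :&: f @^-1: U)%VS = \dim (f @: Z) - \dim U)%N.
Proof.
move=> UfZ; set P := (Z :&: f @^-1: U)%VS.
have fP : (f @: P)%VS = U.
  apply/eqP; rewrite eqEsubv; apply/andP; split; apply/subvP => y.
    by case/memv_imgP => x /memv_capP [_]; rewrite -memv_preim => fxU ->.
  move=> yU; have /memv_imgP [x xZ y_fx] := subvP UfZ y yU.
  by rewrite y_fx memv_img // memv_cap xZ -memv_preim -y_fx.
have kerP : (P :&: lker f)%VS = (Z :&: lker f)%VS.
  apply/vspaceP => x; rewrite !memv_cap -memv_preim memv_ker.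
  by case: (eqVneq (f x) 0) => [->|_]; rewrite ?mem0v ?andbT ?andbF.
by rewrite -(limg_ker_dim f Z) -(limg_ker_dim f P) fP kerP subnDl.
Qed.

Lemma negb_ltn_ord m (v w : 'I_m) : v != w -> ~~ (v < w)%N = (w < v)%N.
Proof.
by move=> vw; rewrite -leqNgt leq_eqVlt eq_sym -[(_ == _)%N]/(v == w) (negbTE vw).
Qed.

Lemma sum_offdiag_antisym (V : zmodType) m (s : {set 'I_m}) (F : 'I_m -> 'I_m -> V) :
  (forall v w, v \in s -> w \in s -> v != w -> F w v = - F v w) ->
  \sum_(v in s) \sum_(w in s :\ v) F v w = 0.
Proof.
move=> F_antisym.
have split_lt v : v \in s -> \sum_(w in s :\ v) F v w =
    \sum_(w in s | (v < w)%N) F v w + \sum_(w in s | (w < v)%N) F v w.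
  move=> vs; rewrite (bigID (fun w : 'I_m => (v < w)%N)) /=; congr (_ + _);
    apply: eq_bigl => w; rewrite !inE; case: (eqVneq w v) => [->|wv];
    by rewrite ?ltnn ?andbF //= ?negb_ltn_ord // eq_sym.
rewrite (eq_bigr _ split_lt) big_split /=.
set X := \sum_(v in s) \sum_(w in s | (v < w)%N) F v w.
suff -> : \sum_(v in s) \sum_(w in s | (w < v)%N) F v w = - X by rewrite addrN.
rewrite (exchange_big_dep (fun w => w \in s)) /=; last by move=> i j _ /andP [].
rewrite /X -sumrN; apply: eq_bigr => w ws; rewrite -sumrN.
apply: eq_big => [v|v /andP [vs /andP [_ wv]]]; first by rewrite ws.
by apply: F_antisym => //; apply: contraTneq wv => ->; rewrite ltnn.
Qed.

Lemma simplicial_complexU n (S1 S2 : {set {set 'I_n}}) :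
  is_simplicial_complex S1 -> is_simplicial_complex S2 -> is_simplicial_complex (S1 :|: S2).
Proof.
move=> S1_sc S2_sc F G; rewrite !inE => /orP [FS|FS] GF.
  by rewrite (S1_sc F).
by rewrite (S2_sc F) ?orbT.
Qed.

Lemma simplicial_complexI n (S1 S2 : {set {set 'I_n}}) :
  is_simplicial_complex S1 -> is_simplicial_complex S2 -> is_simplicial_complex (S1 :&: S2).
Proof.
move=> S1_sc S2_sc F G; rewrite !inE => /andP [FS1 FS2] GF.
by rewrite (S1_sc F) // (S2_sc F).
Qed.

Section Chains.
Variables (K : fieldType) (n : nat).
Local Notation C := (chainsp K n).
Local Notation fdelta := (@fdelta K n).
Local Notation bdry := (bdry K n).
Local Notation chains := (chains K).
Implicit Types (S T : {set {set 'I_n}}) (s t : {set 'I_n}) (f : C).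

Definition linext (G : {set 'I_n} -> C) (f : C) : C := \sum_s f s *: G s.

Lemma linext_is_linear G : linear (linext G).
Proof.
move=> k u v; rewrite /linext scaler_sumr -big_split; apply: eq_bigr => s _ /=.
by rewrite !ffunE scalerDl scalerA.
Qed.

Lemma linfun_linextE G f : linfun (linext G) f = linext G f.
Proof.
pose linM := GRing.isLinear.Build _ _ _ _ (linext G) (linext_is_linear G).
pose L : {linear C -> C} := HB.pack (linext G) linM.
exact: (lfunE L f).
Qed.

Lemma fdeltaE s t : fdelta s t = (t == s)%:R.
Proof. by rewrite ffunE. Qed.

Lemma linextE G f t : linext G f t = \sum_s f s * G s t.
Proof. by rewrite /linext sum_ffunE; apply: eq_bigr => s _; rewrite ffunE. Qed.

Lemma linext_fdelta G t : linext G (fdelta t) = G t.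
Proof.
rewrite /linext (bigD1 t) //= big1 => [|s /negbTE st]; last by rewrite fdeltaE st scale0r.
by rewrite fdeltaE eqxx scale1r addr0.
Qed.

Lemma linext_fdelta_id f : linext fdelta f = f.
Proof.
apply/ffunP => t; rewrite linextE (bigD1 t) //= big1 => [|s /negbTE st].
  by rewrite fdeltaE eqxx mulr1 addr0.
by rewrite fdeltaE eq_sym st mulr0.
Qed.

Definition restr T : 'End(C) :=
  linfun (linext (fun s => if s \in T then fdelta s else 0)).

Lemma restrE T f t : restr T f t = if t \in T then f t else 0.
Proof.
rewrite linfun_linextE linextE (bigD1 t) //= big1 => [|s st].
  by case: (t \in T); rewrite ?ffunE ?eqxx ?mulr1 ?mulr0 ?addr0.
by case: (s \in T); rewrite ?ffunE ?mulr0 // eq_sym (negbTE st) mulr0.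
Qed.

Lemma memv_span_fdeltaP T f :
  reflect (forall t, t \notin T -> f t = 0) (f \in <<[seq fdelta s | s <- enum T]>>%VS).
Proof.
apply: (iffP idP) => [fT t tT | f_supp]; last first.
  rewrite -(linext_fdelta_id f); apply: memv_suml => s _.
  have [sT|sT] := boolP (s \in T); last by rewrite f_supp // scale0r mem0v.
  by apply/memvZ/memv_span/mapP; exists s; rewrite ?mem_enum.
have : (<<[seq fdelta s | s <- enum T]>> <= lker (restr (~: T)))%VS.
  apply/span_subvP => x /mapP [s]; rewrite mem_enum => sT ->.
  rewrite memv_ker; apply/eqP/ffunP => u; rewrite restrE !ffunE inE.
  by case: eqP => [->|_]; rewrite ?sT //= if_same.
move/subvP/(_ _ fT); rewrite memv_ker => /eqP/ffunP/(_ t).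
by rewrite restrE inE tT ffunE.
Qed.

Lemma chainsP S j f :
  reflect (forall t, t \notin [set s in S | #|s| == j.+1] -> f t = 0) (f \in chains S j).
Proof. exact: memv_span_fdeltaP. Qed.

Lemma fdelta_chains S j t : t \in S -> #|t| = j.+1 -> fdelta t \in chains S j.
Proof.
by move=> tS ct; apply/memv_span/mapP; exists t; rewrite ?mem_enum ?inE ?tS ?ct ?eqxx.
Qed.

Lemma linext_chains G S j (U : {vspace C}) f :
  (forall s, s \in S -> #|s| = j.+1 -> G s \in U) -> f \in chains S j -> linext G f \in U.
Proof.
move=> GU /chainsP f_supp; apply: memv_suml => s _.
have [sSj|sSj] := boolP (s \in [set s in S | #|s| == j.+1]).
  by move: sSj; rewrite inE => /andP [sS /eqP cs]; apply/memvZ/GU.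
by rewrite f_supp // scale0r mem0v.
Qed.

Lemma chains_subset S S' j f : S \subset S' -> f \in chains S j -> f \in chains S' j.
Proof.
move=> /subsetP sub /chainsP f_supp; apply/chainsP => t tS'; apply: f_supp.
by apply: contra tS'; rewrite !inE => /andP [/sub -> ->].
Qed.

Lemma chainsI S1 S2 j f :
  f \in chains S1 j -> f \in chains S2 j -> f \in chains (S1 :&: S2) j.
Proof.
move=> /chainsP f1 /chainsP f2; apply/chainsP => t; rewrite !inE.
by case: (boolP (t \in S1)) => t1 Ht; [apply: f2 | apply: f1]; rewrite inE ?(negbTE t1).
Qed.

Lemma restr_chains T S j f : f \in chains S j -> restr T f \in chains (T :&: S) j.
Proof.
move=> /chainsP f_supp; apply/chainsP => t; rewrite restrE !inE.
by case: ifP => //= tT Ht; apply: f_supp; rewrite inE.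
Qed.

Lemma restr_id T S j f : S \subset T -> f \in chains S j -> restr T f = f.
Proof.
move=> /subsetP sub /chainsP f_supp; apply/ffunP => t; rewrite restrE.
by case: ifP => // tT; apply/esym/f_supp; rewrite inE; apply: contraFN tT => /andP [/sub].
Qed.

Lemma subr_restr_chains T S j f :
  f \in chains S j -> f - restr T f \in chains (S :\: T) j.
Proof.
move=> /chainsP f_supp; apply/chainsP => t; rewrite !ffunE restrE !inE.
by case: ifP => tT /=; [rewrite subrr | move=> Ht; rewrite f_supp ?subr0 // inE].
Qed.

Definition face_sign s (v : 'I_n) : K := (-1) ^+ #|[set u in s | (u < v)%N]|.

Definition bdry_simplex s : C := \sum_(v in s) face_sign s v *: fdelta (s :\ v).

Lemma bdryE f : bdry f = linext bdry_simplex f.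
Proof. exact: linfun_linextE. Qed.

Lemma bdry_fdelta s : bdry (fdelta s) = bdry_simplex s.
Proof. by rewrite bdryE linext_fdelta. Qed.

Lemma card_ltn_setU1 s (w v : 'I_n) :
  #|[set u in w |: s | (u < v)%N]| =
    ((w \notin s) && (w < v)%N + #|[set u in s | (u < v)%N]|)%N.
Proof.
have [wv|vw] := boolP (w < v)%N; last first.
  rewrite andbF add0n; apply: eq_card => u; rewrite !inE.
  by case: (eqVneq u w) => [->|_]; rewrite ?(negbTE vw) ?andbF.
have -> : [set u in w |: s | (u < v)%N] = w |: [set u in s | (u < v)%N].
  by apply/setP => u; rewrite !inE; case: (eqVneq u w) => [->|_]; rewrite ?wv.
by rewrite cardsU1 inE wv !andbT.
Qed.

Lemma face_signU1 s w v :
  w \notin s -> face_sign (w |: s) v = (-1) ^+ (w < v)%N * face_sign s v.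
Proof. by move=> ws; rewrite /face_sign card_ltn_setU1 ws exprD. Qed.

Lemma face_signD1 s w v :
  w \in s -> face_sign (s :\ w) v = (-1) ^+ (w < v)%N * face_sign s v.
Proof.
move=> ws; rewrite -{2}(setD1K ws) face_signU1 ?setD11 //.
by rewrite mulrA -expr2 sqrr_sign mul1r.
Qed.

Lemma face_sign_sq s v : face_sign s v * face_sign s v = 1.
Proof. by rewrite -expr2 sqrr_sign. Qed.

Lemma bdry_bdry_simplex s : bdry (bdry_simplex s) = 0.
Proof.
rewrite {1}/bdry_simplex linear_sum /=.
under eq_bigr => v vs do rewrite linearZ /= bdry_fdelta /bdry_simplex scaler_sumr.
apply: sum_offdiag_antisym => v w vs ws vw.
have -> : s :\ w :\ v = s :\ v :\ w by apply/setP => u; rewrite !inE; bool_congr.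
rewrite !face_signD1 // !scalerA -scaleNr; congr (_ *: _).
rewrite -(negb_ltn_ord vw) signrN; ring.
Qed.

Lemma bdry_bdry f : bdry (bdry f) = 0.
Proof.
rewrite (bdryE f) /linext linear_sum big1 // => s _.
by rewrite linearZ /= bdry_bdry_simplex scaler0.
Qed.

Definition cone_simplex a s : C :=
  if a \in s then 0 else face_sign s a *: fdelta (a |: s).

Definition cone_op a : 'End(C) := linfun (linext (cone_simplex a)).

Lemma cone_op_fdelta a s : cone_op a (fdelta s) = cone_simplex a s.
Proof. by rewrite linfun_linextE linext_fdelta. Qed.

Lemma cone_homotopy_fdelta a s :
  bdry (cone_simplex a s) + cone_op a (bdry_simplex s) = fdelta s.
Proof.
rewrite /cone_simplex; case: ifP => [as_|/negbT as_].
  rewrite linear0 add0r linear_sum (bigD1 a) //= big1 => [|v /andP [vs va]].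
    rewrite linearZ /= cone_op_fdelta /cone_simplex setD11 face_signD1 // ltnn mul1r.
    by rewrite setD1K // scalerA face_sign_sq scale1r addr0.
  by rewrite linearZ /= cone_op_fdelta /cone_simplex in_setD1 eq_sym va as_ scaler0.
rewrite linearZ /= bdry_fdelta /bdry_simplex big_setU1 //= setU1K //.
rewrite face_signU1 // ltnn mul1r scalerDr scalerA face_sign_sq scale1r.
rewrite -[RHS]addr0 -addrA; congr (_ + _).
rewrite scaler_sumr linear_sum -big_split big1 // => v vs /=.
have va : v != a by apply: contraNneq as_ => <-.
rewrite [cone_op a _]linearZ /= cone_op_fdelta /cone_simplex in_setD1 (negbTE as_) andbF.
have -> : (a |: s) :\ v = a |: (s :\ v).
  by apply/setP => u; rewrite !inE; case: (eqVneq u v) => [->|]; rewrite ?(negbTE va).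
rewrite face_signU1 // face_signD1 // !scalerA -scalerDl -(negb_ltn_ord va) signrN.
by rewrite [_ + _](_ : _ = 0) ?scale0r //; ring.
Qed.

Lemma cone_homotopy a f : bdry (cone_op a f) + cone_op a (bdry f) = f.
Proof.
rewrite -[in LHS](linext_fdelta_id f) -[in RHS](linext_fdelta_id f) /linext.
rewrite !linear_sum -big_split; apply: eq_bigr => s _ /=.
by rewrite !linearZ /= -scalerDr cone_op_fdelta bdry_fdelta cone_homotopy_fdelta.
Qed.

Lemma bdry_cone_op a f : bdry f = 0 -> bdry (cone_op a f) = f.
Proof. by move=> f_cycle; rewrite -{2}(cone_homotopy a f) f_cycle linear0 addr0. Qed.

Lemma cone_op_notin a f t : a \notin t -> cone_op a f t = 0.
Proof.
move=> at_; rewrite linfun_linextE linextE big1 // => s _.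
rewrite /cone_simplex; case: ifP => [_|as_]; first by rewrite ffunE mulr0.
rewrite !ffunE; case: eqP => [t_as|_]; last by rewrite scaler0 mulr0.
by move: at_; rewrite t_as setU11.
Qed.

Lemma restr_cone_op a T f : a \notin vertex_set T -> restr T (cone_op a f) = 0.
Proof.
move=> aT; apply/ffunP => t; rewrite restrE ffunE; case: ifP => // tT.
by apply: cone_op_notin; apply: contra aT => at_; apply/bigcupP; exists t.
Qed.

Lemma bdry_chains S j f :
  is_simplicial_complex S -> f \in chains S j.+1 -> bdry f \in chains S j.
Proof.
move=> S_sc fS; rewrite bdryE; apply: (linext_chains _ fS) => s sS cs.
apply: memv_suml => v vs; apply/memvZ/fdelta_chains; first exact: S_sc (subD1set s v).
by move: cs; rewrite (cardsD1 v) vs add1n => -[].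
Qed.

Definition is_cone_apex a S := forall s, s \in S -> a |: s \in S.

Lemma cone_op_chains S a j f :
  is_cone_apex a S -> f \in chains S j -> cone_op a f \in chains S j.+1.
Proof.
move=> aS fS; rewrite linfun_linextE; apply: (linext_chains _ fS) => s sS cs.
rewrite /cone_simplex; case: ifP => [_|/negbT as_]; first exact: mem0v.
by apply/memvZ/fdelta_chains; rewrite ?aS // cardsU1 as_ cs.
Qed.

Lemma cyclesP S j z : reflect (z \in chains S j /\ bdry z = 0) (z \in cycles K S j).
Proof.
by rewrite /cycles memv_cap memv_ker; apply: (iffP andP) => [[-> /eqP ->]|[-> ->]].
Qed.

Lemma boundaries_subv_cycles S j :
  is_simplicial_complex S -> (boundaries K S j <= cycles K S j)%VS.
Proof.
move=> S_sc; apply/subvP => _ /memv_imgP [c cS ->]; apply/cyclesP.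
by split; [apply: bdry_chains | apply: bdry_bdry].
Qed.

Section UnionOfCones.
Variables (X1 X2 : {set {set 'I_n}}) (a b : 'I_n).
Hypotheses (X1_sc : is_simplicial_complex X1) (X2_sc : is_simplicial_complex X2).
Hypotheses (X1_apex : is_cone_apex a X1) (X2_apex : is_cone_apex b X2).
Hypothesis b_notin_X1 : b \notin vertex_set X1.
Local Notation X := (X1 :|: X2).
Local Notation Y := (X1 :&: X2).

Definition connecting_map : 'End(C) := (bdry \o restr X1)%VF.

Lemma connecting_mapE f : connecting_map f = bdry (restr X1 f).
Proof. exact: comp_lfunE. Qed.

Lemma restr_union_chainsl k f : f \in chains X k -> restr X1 f \in chains X1 k.
Proof. by move=> fX; apply: chains_subset (restr_chains X1 fX); apply: subsetIl. Qed.

Lemma restr_union_chainsr k f : f \in chains X k -> f - restr X1 f \in chains X2 k.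
Proof.
move=> fX; apply: chains_subset (subr_restr_chains X1 fX).
by apply/subsetP => t; rewrite !inE => /andP [/negbTE -> /=].
Qed.

Lemma connecting_cycles j z : z \in cycles K X j.+1 -> connecting_map z \in cycles K Y j.
Proof.
move=> /cyclesP [zX z_cycle]; rewrite connecting_mapE; apply/cyclesP.
split; last exact: bdry_bdry.
apply: chainsI; first exact: bdry_chains (restr_union_chainsl zX).
have -> : bdry (restr X1 z) = - bdry (z - restr X1 z).
  by rewrite linearB /= z_cycle sub0r opprK.
by rewrite rpredN; apply: bdry_chains (restr_union_chainsr zX).
Qed.

Lemma connecting_onto j y :
  y \in cycles K Y j -> exists2 z, z \in cycles K X j.+1 & connecting_map z = y.
Proof.
move=> /cyclesP [yY y_cycle].
have ayX1 : cone_op a y \in chains X1 j.+1.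
  by apply: cone_op_chains; last exact: chains_subset (subsetIl _ _) yY.
have byX2 : cone_op b y \in chains X2 j.+1.
  by apply: cone_op_chains; last exact: chains_subset (subsetIr _ _) yY.
exists (cone_op a y - cone_op b y).
  apply/cyclesP; split; last by rewrite linearB /= !bdry_cone_op // subrr.
  by apply: memvB; [apply: chains_subset (subsetUl _ _) ayX1 |
                    apply: chains_subset (subsetUr _ _) byX2].
rewrite connecting_mapE linearB /= (restr_cone_op _ b_notin_X1) subr0.
by rewrite (restr_id (subxx X1) ayX1) bdry_cone_op.
Qed.

Lemma limg_connecting j : (connecting_map @: cycles K X j.+1)%VS = cycles K Y j.
Proof.
apply/vspaceP => y; apply/memv_imgP/idP => [[z zZ ->]|/connecting_onto [z zZ <-]].
  exact: connecting_cycles.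
by exists z.
Qed.

Lemma connecting_boundaries j x :
  x \in boundaries K X j.+1 -> connecting_map x \in boundaries K Y j.
Proof.
case/memv_imgP => c cX ->; rewrite connecting_mapE.
have bdry_c1 := bdry_chains X1_sc (restr_union_chainsl cX).
have -> : bdry c = bdry (restr X1 c) + bdry (c - restr X1 c).
  by rewrite linearB /= addrC subrK.
rewrite linearD /= (restr_id (subxx X1) bdry_c1) linearD /= bdry_bdry add0r.
by apply/memv_img/restr_chains/(bdry_chains X2_sc)/restr_union_chainsr.
Qed.

Lemma connecting_preim_boundaries j z : z \in cycles K X j.+1 ->
  connecting_map z \in boundaries K Y j -> z \in boundaries K X j.+1.
Proof.
move=> /cyclesP [zX z_cycle]; rewrite connecting_mapE => /memv_imgP [w wY bdry_w].
set z1 := restr X1 z; set z2 := z - z1.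
have z1X1 : z1 \in chains X1 j.+1 := restr_union_chainsl zX.
have z2X2 : z2 \in chains X2 j.+1 := restr_union_chainsr zX.
have wX1 : w \in chains X1 j.+1 by apply: chains_subset (subsetIl _ _) wY.
have wX2 : w \in chains X2 j.+1 by apply: chains_subset (subsetIr _ _) wY.
have z1w_cycle : bdry (z1 - w) = 0 by rewrite linearB /= bdry_w subrr.
have z2w_cycle : bdry (z2 + w) = 0.
  by rewrite linearD /= linearB /= z_cycle -bdry_w sub0r addNr.
have -> : z = bdry (cone_op a (z1 - w) + cone_op b (z2 + w)).
  by rewrite linearD /= !bdry_cone_op // /z2 addrACA addNr addr0 addrC subrK.
apply/memv_img/memvD.
  exact: chains_subset (subsetUl _ _) (cone_op_chains X1_apex (memvB z1X1 wX1)).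
exact: chains_subset (subsetUr _ _) (cone_op_chains X2_apex (memvD z2X2 wX2)).
Qed.

Lemma preim_connecting_boundaries j :
  (cycles K X j.+1 :&: connecting_map @^-1: boundaries K Y j)%VS = boundaries K X j.+1.
Proof.
apply/vspaceP => x; rewrite memv_cap -memv_preim.
apply/andP/idP => [[]|xB]; first exact: connecting_preim_boundaries.
split; last exact: connecting_boundaries.
exact: subvP (boundaries_subv_cycles _ (simplicial_complexU X1_sc X2_sc)) x xB.
Qed.

Theorem red_betti_union_cones j : red_betti K X j.+1 = red_betti K Y j.
Proof.
rewrite /red_betti -(preim_connecting_boundaries j) dim_preim_codim limg_connecting //.
exact: boundaries_subv_cycles (simplicial_complexI X1_sc X2_sc).
Qed.

End UnionOfCones.
End Chains.

Lemma cone_simplicial_complex n (A : {set 'I_n}) (D : {set {set 'I_n}}) :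
  is_simplicial_complex (cone A D).
Proof.
move=> F G; rewrite !inE => /existsP [H /andP [HD FH]] GF.
by apply/existsP; exists H; rewrite HD (subset_trans GF FH).
Qed.

Lemma cone_apex n (A : {set 'I_n}) (D : {set {set 'I_n}}) a :
  a \in A -> is_cone_apex a (cone A D).
Proof.
move=> aA s; rewrite !inE => /existsP [H /andP [HD sH]].
by apply/existsP; exists H; rewrite HD subUset sub1set inE aA sH.
Qed.

Lemma notin_vertex_set_cone n (A : {set 'I_n}) (D : {set {set 'I_n}}) b :
  b \notin A -> b \notin vertex_set D -> b \notin vertex_set (cone A D).
Proof.
move=> bA bD; apply/bigcupP => -[G]; rewrite inE => /existsP [F /andP [FD GAF]] bG.
have := subsetP GAF b bG; rewrite inE (negbTE bA) /= => bF.
by case/negP: bD; apply/bigcupP; exists F.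
Qed.

Lemma cone_face_subset n (A B F1 F2 G : {set 'I_n}) :
  [disjoint A & B] -> [disjoint A & F2] ->
  G \subset A :|: F1 -> G \subset B :|: F2 -> G \subset F1.
Proof.
move=> AB AF2 GAF1 GBF2; apply/subsetP => x xG.
have := subsetP GAF1 x xG; rewrite inE => /orP [xA|//].
by have := subsetP GBF2 x xG; rewrite inE (disjointFr AB xA) (disjointFr AF2 xA).
Qed.

Lemma coneI n (D1 D2 : {set {set 'I_n}}) (A B : {set 'I_n}) :
  is_simplicial_complex D1 -> is_simplicial_complex D2 -> [disjoint A & B] ->
  [disjoint (A :|: B) & vertex_set (D1 :|: D2)] ->
  cone A D1 :&: cone B D2 = D1 :&: D2.
Proof.
move=> D1_sc D2_sc AB ABD.
have disj_face (C F : {set 'I_n}) : C \subset A :|: B -> F \in D1 :|: D2 -> [disjoint C & F].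
  by move=> CAB FD; apply: disjointW CAB _ ABD; apply: (bigcup_sup F FD).
apply/setP => G; rewrite !inE; apply/andP/andP => [[]|[GD1 GD2]]; last first.
  by split; apply/existsP; exists G; rewrite subsetUr ?GD1 ?GD2.
case/existsP => F1 /andP [F1D1 GAF1] /existsP [F2 /andP [F2D2 GBF2]]; split.
  apply: (D1_sc F1) => //; apply: cone_face_subset AB _ GAF1 GBF2.
  by apply: disj_face; rewrite ?subsetUl // inE F2D2 orbT.
apply: (D2_sc F2) => //; apply: cone_face_subset _ _ GBF2 GAF1; first by rewrite disjoint_sym.
by apply: disj_face; rewrite ?subsetUr // inE F1D1.
Qed.

Lemma red_betti_coneU (K : fieldType) n (D1 D2 : {set {set 'I_n}}) (A B : {set 'I_n}) j :
  is_simplicial_complex D1 -> is_simplicial_complex D2 ->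
  A != set0 -> B != set0 -> A :&: B = set0 ->
  [disjoint (A :|: B) & vertex_set (D1 :|: D2)] ->
  red_betti K (cone A D1 :|: cone B D2) j.+1 = red_betti K (D1 :&: D2) j.
Proof.
move=> D1_sc D2_sc /set0Pn [a aA] /set0Pn [b bB] AB0 ABD.
have AB : [disjoint A & B] by rewrite -setI_eq0 AB0.
rewrite -(coneI D1_sc D2_sc AB ABD).
apply: (red_betti_union_cones K (@cone_simplicial_complex n A D1)
  (@cone_simplicial_complex n B D2) (cone_apex aA) (cone_apex bB)).
have bD : b \notin vertex_set (D1 :|: D2) by rewrite (disjointFr ABD) // inE bB orbT.
apply: notin_vertex_set_cone; first by rewrite (disjointFl AB bB).
by apply: contra bD; rewrite /vertex_set bigcup_setU inE => ->.
Qed.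

Theorem corollary3p2 (K : fieldType) (n : nat) (D1 D2 : {set {set 'I_n}})
  (A B A' B' : {set 'I_n}) :
  is_simplicial_complex D1 -> is_simplicial_complex D2 ->
  A != set0 -> B != set0 -> A' != set0 -> B' != set0 ->
  A :&: B = set0 -> A' :&: B' = set0 ->
  [disjoint (A :|: B) & vertex_set (D1 :|: D2)] ->
  [disjoint (A' :|: B') & vertex_set (D1 :|: D2)] ->
  forall i : nat, (0 < i)%N ->
    red_betti K (cone A D1 :|: cone B D2) i = red_betti K (cone A' D1 :|: cone B' D2) i.
Proof.
move=> D1_sc D2_sc An Bn A'n B'n AB0 A'B'0 ABD A'B'D [|j] // _.
by rewrite !red_betti_coneU.
Qed.
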